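(* Let $\mathbf{L}=(L,\wedge,\vee)$ be a semidistributive lattice. Then $\mathbf{L}$ hypersatisfies the hyper-quasi-identity $$(F(x,y)=F(x,z))\rightarrow (F(x,y)=F(x,G(y,z))),$$ where $F$ and $G$ are binary hypervariables. Explicitly: for all binary lattice terms $p(x,y)$ and $q(x,y)$ and all $a,b,c\in L$, if $p^{\mathbf L}(a,b)=p^{\mathbf L}(a,c)$ then $p^{\mathbf L}(a,b)=p^{\mathbf L}(a,q^{\mathbf L}(b,c))$.
   Context: A lattice is join-semidistributive if it satisfies the quasi-identity $x\vee y=x\vee z \rightarrow x\vee y = x\vee(y\wedge z)$, and meet-semidistributive if it satisfies $x\wedge y=x\wedge z\rightarrow x\wedge y=x\wedge(y\vee z)$. A lattice is semidistributive if it is both join- and meet-semidistributive. A hyper-quasi-identity with hypervariables $F,G$ is hypersatisfied in an algebra if the quasi-identity obtained by substituting arbitrary terms of the type (of the corresponding arities, here binary lattice terms) for the hypervariables, leaving the individual variables unchanged, holds in the algebra for all values of the individual variables. *)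

From HB Require Import structures.
From mathcomp Require Import all_boot all_order.
Set Implicit Arguments. Unset Strict Implicit. Unset Printing Implicit Defensive.
Import Order.LTheory.
Local Open Scope order_scope.

Inductive lterm2 : Type :=
  | LVar0 : lterm2
  | LVar1 : lterm2
  | LMeet : lterm2 -> lterm2 -> lterm2
  | LJoin : lterm2 -> lterm2 -> lterm2.

Fixpoint leval {d : Order.disp_t} {L : latticeType d} (p : lterm2) (a b : L) : L :=
  match p with
  | LVar0 => a
  | LVar1 => b
  | LMeet p1 p2 => leval p1 a b `&` leval p2 a b
  | LJoin p1 p2 => leval p1 a b `|` leval p2 a b
  end.

Definition join_semidistributive {d : Order.disp_t} (L : latticeType d) : Prop :=
  forall x y z : L, x `|` y = x `|` z -> x `|` y = x `|` (y `&` z).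

Definition meet_semidistributive {d : Order.disp_t} (L : latticeType d) : Prop :=
  forall x y z : L, x `&` y = x `&` z -> x `&` y = x `&` (y `|` z).

Definition semidistributive {d : Order.disp_t} (L : latticeType d) : Prop :=
  join_semidistributive L /\ meet_semidistributive L.

From mathcomp Require Import all_boot all_order.
Import Order.LTheory.
Local Open Scope order_scope.

(* A binary lattice term induces one of only four operations: the two
   projections, meet and join, since these are closed under meet and join by
   absorption.  The hyper-quasi-identity therefore reduces to sixteen
   instances; those that do not hold in every lattice are exactly join- and
   meet-semidistributivity, or have a trivial premise or conclusion. *)

Ltac lattice_le := match goal with
| |- is_true (?x <= ?x) => exact: lexx
| |- is_true (_ <= _ `&` _) => rewrite lexI; apply/andP; split; lattice_le
| |- is_true (_ `|` _ <= _) => rewrite leUx; apply/andP; split; lattice_le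
| |- is_true (_ `&` _ <= _) =>
    first [apply: le_trans (leIl _ _) _; lattice_le
          | apply: le_trans (leIr _ _) _; lattice_le]
| |- is_true (_ <= _ `|` _) =>
    first [apply: le_trans _ (leUl _ _); lattice_le
          | apply: le_trans _ (leUr _ _); lattice_le]
end.

Ltac lattice_eq := apply: le_anti; apply/andP; split; lattice_le.

Inductive binop := Proj1 | Proj2 | Meet | Join.

Definition binop_eval {d : Order.disp_t} {L : latticeType d}
    (o : binop) (a b : L) : L :=
  match o with
  | Proj1 => a
  | Proj2 => b
  | Meet => a `&` b
  | Join => a `|` b
  end.

Definition binop_meet (o1 o2 : binop) : binop :=
  match o1, o2 with
  | Proj1, (Proj1 | Join) | Join, Proj1 => Proj1
  | Proj2, (Proj2 | Join) | Join, Proj2 => Proj2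
  | Join, Join => Join
  | _, _ => Meet
  end.

Definition binop_join (o1 o2 : binop) : binop :=
  match o1, o2 with
  | Proj1, (Proj1 | Meet) | Meet, Proj1 => Proj1
  | Proj2, (Proj2 | Meet) | Meet, Proj2 => Proj2
  | Meet, Meet => Meet
  | _, _ => Join
  end.

Fixpoint term_binop (p : lterm2) : binop :=
  match p with
  | LVar0 => Proj1
  | LVar1 => Proj2
  | LMeet p1 p2 => binop_meet (term_binop p1) (term_binop p2)
  | LJoin p1 p2 => binop_join (term_binop p1) (term_binop p2)
  end.

Section BinaryTermOperations.
Variables (d : Order.disp_t) (L : latticeType d).

Lemma binop_evalI (o1 o2 : binop) (a b : L) :
  binop_eval (binop_meet o1 o2) a b = binop_eval o1 a b `&` binop_eval o2 a b.
Proof. by case: o1; case: o2 => /=; lattice_eq. Qed.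

Lemma binop_evalU (o1 o2 : binop) (a b : L) :
  binop_eval (binop_join o1 o2) a b = binop_eval o1 a b `|` binop_eval o2 a b.
Proof. by case: o1; case: o2 => /=; lattice_eq. Qed.

Lemma leval_term_binop (p : lterm2) (a b : L) :
  leval p a b = binop_eval (term_binop p) a b.
Proof.
elim: p => [|| p1 IH1 p2 IH2 | p1 IH1 p2 IH2] //=.
  by rewrite binop_evalI IH1 IH2.
by rewrite binop_evalU IH1 IH2.
Qed.

Lemma meet_eq_meetI (a b c : L) : a `&` b = a `&` c -> a `&` b = a `&` (b `&` c).
Proof. by move=> abc; rewrite meetA abc -meetA meetxx. Qed.

Lemma join_eq_joinU (a b c : L) : a `|` b = a `|` c -> a `|` b = a `|` (b `|` c).
Proof. by move=> abc; rewrite joinA abc -joinA joinxx. Qed.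

End BinaryTermOperations.

Theorem proposition3p2 (d : Order.disp_t) (L : latticeType d) :
  semidistributive L ->
  forall (p q : lterm2) (a b c : L),
    leval p a b = leval p a c -> leval p a b = leval p a (leval q b c).
Proof.
move=> [JSD MSD] p q a b c.
rewrite !leval_term_binop.
case: (term_binop q); case: (term_binop p) => //= abc.
- by rewrite -abc meetxx.
- exact: meet_eq_meetI.
- exact: JSD.
- by rewrite -abc joinxx.
- exact: MSD.
- exact: join_eq_joinU.
Qed.
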